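(* Let $\Gamma\subseteq A$ be $\Bbbk$-algebras, $\sim$ an equivalence relation on $\mathrm{cfs}(\Gamma)$, and suppose $\Gamma$ is a strong Harish-Chandra block subalgebra of $A$ with respect to $\sim$. Let $B,C,D\in\mathrm{cfs}(\Gamma)/{\sim}$, $\mathfrak m\in\mathcal W(B)$ and $\mathfrak l\in\mathcal W(D)$. Then there is $\mathfrak n\in\mathcal W(C)$ such that $$A/(\mathfrak lA+A\mathfrak n)\cong(A/\mathfrak lA)(C)\quad\text{and}\quad A/(\mathfrak nA+A\mathfrak m)\cong(A/A\mathfrak m)(C)$$ as $(\Gamma,\Gamma)$-bimodules.
   Context: $\mathrm{cfs}(\Gamma)$: maximal two-sided ideals $\mathfrak m$ with $\dim\Gamma/\mathfrak m<\infty$. For a class $B$, $\mathcal W(B)=\{\mathfrak m_1\cdots\mathfrak m_k:k\ge0,\mathfrak m_i\in B\}$. For a left $\Gamma$-module $V$, $V(B)=\{v:\mathfrak mv=0$ for some $\mathfrak m\in\mathcal W(B)\}$; for a right $\Gamma$-module (such as $A/\mathfrak lA$), $V(B)=\{v:v\mathfrak m=0$ for some $\mathfrak m\in\mathcal W(B)\}$. A strong block module is one with $V=\bigoplus_BV(B)$ and each $V(B)$ killed by some element of $\mathcal W(B)$. $\Gamma$ is a strong Harish-Chandra block subalgebra of $A$ if for all $B$ and $\mathfrak m\in\mathcal W(B)$, the left module $A/A\mathfrak m$ and the right module $A/\mathfrak mA$ are strong block modules. *)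

From HB Require Import structures.
From mathcomp Require Import all_boot all_order all_algebra.
From Stdlib Require List.
Set Implicit Arguments. Unset Strict Implicit. Unset Printing Implicit Defensive.
Import GRing.Theory.
Local Open Scope ring_scope.

(* Setting: k a field, A a k-algebra (algType k), Gamma a (unital)
   k-subalgebra of A given as a predicate [G : {pred A}] with [subalg_closed G]. *)

Section HC.
Variables (k : fieldType) (A : algType k) (G : {pred A}).

Definition Gset : A -> Prop := fun x => x \in G.
Definition Aall : A -> Prop := fun _ => True.

(* I J := additive span of the products x * y, x in I, y in J.
   Used for products of ideals of Gamma, for lA and for Am. *)
Inductive spanMul (I J : A -> Prop) : A -> Prop :=
| spanMul0 : spanMul I J 0
| spanMulM x y : I x -> J y -> spanMul I J (x * y)
| spanMulD u v : spanMul I J u -> spanMul I J v -> spanMul I J (u + v).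

Definition addS (S T : A -> Prop) : A -> Prop :=
  fun a => exists s t, S s /\ T t /\ a = s + t.

Definition is_ideal (I : A -> Prop) : Prop :=
  [/\ forall x, I x -> x \in G,
      I 0,
      forall x y, I x -> I y -> I (x + y),
      forall g x, g \in G -> I x -> I (g * x)
    & forall g x, g \in G -> I x -> I (x * g)].

Definition is_max_ideal (I : A -> Prop) : Prop :=
  [/\ is_ideal I, ~ I 1 &
      forall J, is_ideal J -> (forall x, I x -> J x) ->
        (forall x, J x -> I x) \/ (forall x, x \in G -> J x)].

(* dim Gamma / I < oo : Gamma/I is spanned by the classes of finitely many
   elements of Gamma *)
Definition fin_codim (I : A -> Prop) : Prop :=
  exists s : seq A, all (fun x => x \in G) s /\
    forall g, g \in G -> exists c : 'I_(size s) -> k,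
      I (g - \sum_(i < size s) c i *: s`_i).

Definition cfs (m : A -> Prop) : Prop := is_max_ideal m /\ fin_codim m.

Definition equiv_on_cfs (R : (A -> Prop) -> (A -> Prop) -> Prop) : Prop :=
  [/\ forall m, cfs m -> R m m,
      forall m n, cfs m -> cfs n -> R m n -> R n m
    & forall m n p, cfs m -> cfs n -> cfs p -> R m n -> R n p -> R m p].

Definition cfs_class (R : (A -> Prop) -> (A -> Prop) -> Prop)
  (B : (A -> Prop) -> Prop) : Prop :=
  exists m0, cfs m0 /\ forall m, B m <-> (cfs m /\ R m0 m).

Definition idealProd (ms : seq (A -> Prop)) : A -> Prop :=
  foldr spanMul Gset ms.

Definition inW (B : (A -> Prop) -> Prop) (n : A -> Prop) : Prop :=
  exists ms : seq (A -> Prop), List.Forall B ms /\ n = idealProd ms.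

(* For a Gamma-module A/S with action [act] (act x a = x * a for a left
   module, a * x for a right module), the class of a lies in (A/S)(B). *)
Definition partOf (act : A -> A -> A) (B : (A -> Prop) -> Prop)
  (S : A -> Prop) (a : A) : Prop :=
  exists n, inW B n /\ forall x, n x -> S (act x a).

Definition lact (x a : A) : A := x * a.
Definition ract (x a : A) : A := a * x.

Definition leftPart := partOf lact.
Definition rightPart := partOf ract.

Definition strong_block (R : (A -> Prop) -> (A -> Prop) -> Prop)
  (act : A -> A -> A) (S : A -> Prop) : Prop :=
  [/\
      forall a, exists (n : nat) (Bs : 'I_n -> ((A -> Prop) -> Prop))
                       (as_ : 'I_n -> A),
        [/\ forall i, cfs_class R (Bs i),
            forall i, partOf act (Bs i) S (as_ i)
          & S (a - \sum_(i < n) as_ i)],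
      forall (n : nat) (Bs : 'I_n -> ((A -> Prop) -> Prop)) (as_ : 'I_n -> A),
        (forall i, cfs_class R (Bs i)) ->
        (forall i j, i != j -> Bs i <> Bs j) ->
        (forall i, partOf act (Bs i) S (as_ i)) ->
        S (\sum_(i < n) as_ i) -> forall i, S (as_ i)
    &
      forall B, cfs_class R B ->
        exists n, inW B n /\ forall a, partOf act B S a ->
          forall x, n x -> S (act x a)].

Definition strong_HC_block (R : (A -> Prop) -> (A -> Prop) -> Prop) : Prop :=
  forall B, cfs_class R B -> forall m, inW B m ->
    strong_block R lact (spanMul Aall m) /\ strong_block R ract (spanMul m Aall).

(* The (Gamma,Gamma)-bimodule A/S1 is isomorphic to the sub-bimodule
   P2/S2 of A/S2 (P2 a subset of A containing S2); the isomorphism is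
   given on representatives. *)
Definition bimod_iso (S1 P2 S2 : A -> Prop) : Prop :=
  exists f : A -> A,
    (forall a b, S1 (a - b) -> S2 (f a - f b)) /\
    (forall a, P2 (f a)) /\
    (forall a b, S2 (f (a + b) - (f a + f b))) /\
    (forall (c : k) a, S2 (f (c *: a) - c *: f a)) /\
      (forall g a, g \in G -> S2 (f (g * a) - g * f a)) /\
      (forall g a, g \in G -> S2 (f (a * g) - f a * g)) /\
    (forall a, S2 (f a) -> S1 a) /\
    (forall b, P2 b -> exists a, S2 (f a - b)).

End HC.

From HB Require Import structures.
From mathcomp Require Import all_boot all_order all_algebra.
From Stdlib Require Import Classical ClassicalEpsilon.
From Stdlib Require Import FunctionalExtensionality PropExtensionality.
From Stdlib Require List.
Set Implicit Arguments. Unset Strict Implicit. Unset Printing Implicit Defensive.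
Import GRing.Theory.
Local Open Scope ring_scope.

(* By the strong block property A/lA is the direct sum of its blocks
   (A/lA)(B), and (A/lA)(C) is killed by some n in W(C), which can be chosen
   to serve for A/Am as well.  Distinct maximal ideals are comaximal, so for
   B <> C every element of W(B) is comaximal with n; hence the components of
   a in the blocks B <> C lie in (A/lA) n.  The projection onto (A/lA)(C)
   along the other blocks is therefore a bimodule map A -> (A/lA)(C) whose
   kernel is exactly lA + An.  The statement for A/Am is the same one for
   the opposite algebra A^c. *)

Section Bimodules.
Variables (k : fieldType) (A : algType k) (G : {pred A}).

Definition comaximal (I J : A -> Prop) := exists u v, [/\ I u, J v & u + v = 1].

Definition bimod_closed (S : A -> Prop) :=
  [/\ S 0, forall x y, S x -> S y -> S (x - y),
      forall g x, g \in G -> S x -> S (g * x)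
    & forall g x, g \in G -> S x -> S (x * g)].

Lemma bimod_closedN S x : bimod_closed S -> S x -> S (- x).
Proof. by case=> S0 SB _ _ Sx; rewrite -sub0r; apply: SB. Qed.

Lemma bimod_closedD S x y : bimod_closed S -> S x -> S y -> S (x + y).
Proof.
move=> bS Sx Sy; rewrite -[y]opprK; have [_ SB _ _] := bS.
by apply: SB => //; apply: bimod_closedN.
Qed.

Lemma bimod_closed_sum S (I : Type) (r : seq I) (P : pred I) (F : I -> A) :
  bimod_closed S -> (forall i, P i -> S (F i)) -> S (\sum_(i <- r | P i) F i).
Proof.
move=> bS SF; apply: big_ind => //; first by case: bS.
by move=> x y; apply: bimod_closedD.
Qed.

Lemma bimod_closed_idealA I : is_ideal G I -> bimod_closed (spanMul I (@Aall _ A)).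
Proof.
case=> _ _ _ Il _; split.
- exact: spanMul0.
- move=> x y Sx Sy; apply: spanMulD Sx _.
  elim: Sy => [|a b Ia _|u v _ hu _ hv].
  + by rewrite oppr0; apply: spanMul0.
  + by rewrite -mulrN; apply: spanMulM.
  + by rewrite opprD; apply: spanMulD.
- move=> g x hg; elim=> [|a b Ia _|u v _ hu _ hv].
  + by rewrite mulr0; apply: spanMul0.
  + by rewrite mulrA; apply: spanMulM => //; apply: Il.
  + by rewrite mulrDr; apply: spanMulD.
- move=> g x hg; elim=> [|a b Ia _|u v _ hu _ hv].
  + by rewrite mul0r; apply: spanMul0.
  + by rewrite -mulrA; apply: spanMulM.
  + by rewrite mulrDl; apply: spanMulD.
Qed.

Lemma bimod_closed_Aideal I : is_ideal G I -> bimod_closed (spanMul (@Aall _ A) I).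
Proof.
case=> _ _ _ _ Ir; split.
- exact: spanMul0.
- move=> x y Sx Sy; apply: spanMulD Sx _.
  elim: Sy => [|a b _ Ib|u v _ hu _ hv].
  + by rewrite oppr0; apply: spanMul0.
  + by rewrite -mulNr; apply: spanMulM.
  + by rewrite opprD; apply: spanMulD.
- move=> g x hg; elim=> [|a b _ Ib|u v _ hu _ hv].
  + by rewrite mulr0; apply: spanMul0.
  + by rewrite mulrA; apply: spanMulM.
  + by rewrite mulrDr; apply: spanMulD.
- move=> g x hg; elim=> [|a b _ Ib|u v _ hu _ hv].
  + by rewrite mul0r; apply: spanMul0.
  + by rewrite -mulrA; apply: spanMulM => //; apply: Ir.
  + by rewrite mulrDl; apply: spanMulD.
Qed.

Lemma bimod_iso_eq S1 S1' P2 P2' S2 :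
  (forall a, S1 a <-> S1' a) -> (forall a, P2 a <-> P2' a) ->
  bimod_iso G S1 P2 S2 -> bimod_iso G S1' P2' S2.
Proof.
move=> eS1 eP2 [f [wd [land [fD [fZ [fMl [fMr [inj surj]]]]]]]].
exists f; repeat split => //.
- by move=> a b /eS1; apply: wd.
- by move=> a; apply/eP2.
- by move=> a /inj /eS1.
- by move=> b /eP2 /surj.
Qed.

End Bimodules.

Section Converse.
Variables (k : fieldType) (A : algType k).

HB.instance Definition _ := @GRing.Zmodule_isLmodule.Build k A^c (@GRing.scale k A)
  (@scalerA k A) (@scale1r k A) (@scalerDr k A) (fun v a b => @scalerDl k A v a b).
HB.instance Definition _ :=
  @GRing.Lmodule_isLalgebra.Build k A^c (fun a (x y : A) => scalerAr a y x).
HB.instance Definition _ :=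
  @GRing.Lalgebra_isAlgebra.Build k A^c (fun a (x y : A) => scalerAl a y x).

Lemma spanMul_converse (I J : A -> Prop) x :
  spanMul (A := A^c) I J x <-> spanMul J I x.
Proof.
split; elim=> [|y z Iy Jz|u v _ hu _ hv].
- exact: spanMul0.
- exact: (spanMulM (A := A) Jz Iy).
- exact: spanMulD.
- exact: spanMul0.
- exact: (spanMulM (A := A^c) Jz Iy).
- exact: spanMulD.
Qed.

Variable G : {pred A}.

Lemma subalg_closed_converse : subalg_closed G -> subalg_closed (G : {pred A^c}).
Proof. by case=> G1 GZD GM; split => // x y Gx Gy; apply: GM. Qed.

Lemma is_ideal_converse I : is_ideal G I -> is_ideal (A := A^c) G I.
Proof. by case=> IG I0 ID Il Ir; split. Qed.

Lemma bimod_closed_converse S : bimod_closed G S -> bimod_closed (A := A^c) G S.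
Proof. by case=> S0 SB SMl SMr; split. Qed.

Lemma bimod_iso_converse S1 P2 S2 :
  bimod_iso (A := A^c) G S1 P2 S2 -> bimod_iso G S1 P2 S2.
Proof.
move=> [f [wd [land [fD [fZ [fMl [fMr [inj surj]]]]]]]].
by exists f; repeat split => //.
Qed.

End Converse.

Section Ideals.
Variables (k : fieldType) (A : algType k) (G : {pred A}).
Hypothesis subalgG : subalg_closed G.
HB.instance Definition _ :=
  GRing.isSubalgClosed.Build k A G (GRing.subalg_closed_semi subalgG).

Lemma Gset_ideal : is_ideal G (Gset G).
Proof. by split; rewrite /Gset // => *; rewrite ?rpred0 ?rpredD ?rpredM. Qed.

Lemma spanMul_ideal I J : is_ideal G I -> is_ideal G J -> is_ideal G (spanMul I J).
Proof.
case=> IG _ _ Il _ [JG _ _ _ Jr]; split.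
- move=> x; elim=> [|a b Ia Jb|u v _ hu _ hv]; first exact: rpred0.
  + by apply: rpredM; [apply: IG | apply: JG].
  + exact: rpredD.
- exact: spanMul0.
- by move=> x y; apply: spanMulD.
- move=> g x hg; elim=> [|a b Ia Jb|u v _ hu _ hv].
  + by rewrite mulr0; apply: spanMul0.
  + by rewrite mulrA; apply: spanMulM => //; apply: Il.
  + by rewrite mulrDr; apply: spanMulD.
- move=> g x hg; elim=> [|a b Ia Jb|u v _ hu _ hv].
  + by rewrite mul0r; apply: spanMul0.
  + by rewrite -mulrA; apply: spanMulM => //; apply: Jr.
  + by rewrite mulrDl; apply: spanMulD.
Qed.

Lemma idealProd_ideal ms : List.Forall (is_ideal G) ms -> is_ideal G (idealProd G ms).
Proof.
by elim=> [|m {}ms Im _ IH]; [apply: Gset_ideal | apply: spanMul_ideal].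
Qed.

Lemma addS_ideal I J : is_ideal G I -> is_ideal G J -> is_ideal G (addS I J).
Proof.
case=> IG I0 ID Il Ir [JG J0 JD Jl Jr]; split.
- by move=> _ [s [t [Is [Jt ->]]]]; apply: rpredD; [apply: IG | apply: JG].
- by exists 0, 0; rewrite addr0.
- move=> _ _ [s [t [Is [Jt ->]]]] [s' [t' [Is' [Jt' ->]]]].
  by exists (s + s'), (t + t'); rewrite addrACA; split; [apply: ID|split; [apply: JD|]].
- move=> g _ hg [s [t [Is [Jt ->]]]].
  by exists (g * s), (g * t); rewrite mulrDr; split; [apply: Il|split; [apply: Jl|]].
- move=> g _ hg [s [t [Is [Jt ->]]]].
  by exists (s * g), (t * g); rewrite mulrDl; split; [apply: Ir|split; [apply: Jr|]].
Qed.

Lemma spanMul_mono (I J I' J' : A -> Prop) :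
  (forall x, I x -> I' x) -> (forall x, J x -> J' x) ->
  forall x, spanMul I J x -> spanMul I' J' x.
Proof.
move=> II' JJ' x; elim=> [|a b Ia Jb|u v _ hu _ hv].
- exact: spanMul0.
- by apply: spanMulM; [apply: II' | apply: JJ'].
- exact: spanMulD.
Qed.

Lemma spanMul_subr I J :
  (forall x, I x -> x \in G) -> is_ideal G J -> forall x, spanMul I J x -> J x.
Proof.
move=> IG [_ J0 JD Jl _] x; elim=> [|a b Ia Jb|u v _ hu _ hv] //.
- exact: Jl _ _ (IG _ Ia) Jb.
- exact: JD.
Qed.

Lemma idealProd_catl ms1 ms2 :
  List.Forall (is_ideal G) ms2 ->
  forall x, idealProd G (ms1 ++ ms2) x -> idealProd G ms1 x.
Proof.
move=> I2; elim: ms1 => [|m ms1 IH] x /=.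
- by case: (idealProd_ideal I2) => + _ _ _ _; apply.
- exact: spanMul_mono.
Qed.

Lemma idealProd_catr ms1 ms2 :
  List.Forall (is_ideal G) ms1 -> List.Forall (is_ideal G) ms2 ->
  forall x, idealProd G (ms1 ++ ms2) x -> idealProd G ms2 x.
Proof.
move=> + I2; elim=> [|m {}ms1 [mG _ _ _ _] _ IH] x //= h.
by apply: (spanMul_subr mG (idealProd_ideal I2)); apply: spanMul_mono h.
Qed.

Lemma comaximal_sym (I J : A -> Prop) : comaximal I J -> comaximal J I.
Proof. by case=> u [v [Iu Jv uv]]; exists v, u; rewrite addrC. Qed.

Lemma comaximalG I : is_ideal G I -> comaximal I (Gset G).
Proof. by case=> _ I0 _ _ _; exists 0, 1; rewrite add0r /Gset rpred1. Qed.

Lemma comaximal_spanMulr I J J' :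
  is_ideal G I -> (forall x, J x -> x \in G) -> (forall x, J' x -> x \in G) ->
  comaximal I J -> comaximal I J' -> comaximal I (spanMul J J').
Proof.
case=> IG _ ID Il Ir JG J'G [u [v [Iu Jv uv]]] [u' [v' [Iu' Jv' uv']]].
exists (u * u' + u * v' + v * u'), (v * v'); split.
- apply: (ID); first apply: (ID).
  + exact: Ir _ _ (IG _ Iu') Iu.
  + exact: Ir _ _ (J'G _ Jv') Iu.
  + exact: Il _ _ (JG _ Jv) Iu'.
- exact: spanMulM.
- by rewrite -[1]mulr1 -{1}uv -uv' mulrDl !mulrDr !addrA.
Qed.

Lemma comaximal_idealProdr I ns :
  is_ideal G I -> List.Forall (is_ideal G) ns -> List.Forall (comaximal I) ns ->
  comaximal I (idealProd G ns).
Proof.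
move=> II; elim=> [|n {}ns [nG _ _ _ _] Ins IH] /=; first by move=> _; apply: comaximalG.
case/List.Forall_cons_iff=> In /IH Ins'.
by apply: comaximal_spanMulr => //; case: (idealProd_ideal Ins).
Qed.

Lemma comaximal_idealProdl ms J :
  is_ideal G J -> List.Forall (is_ideal G) ms -> List.Forall (fun I => comaximal I J) ms ->
  comaximal (idealProd G ms) J.
Proof.
move=> IJ Ims cms; apply: comaximal_sym; apply: comaximal_idealProdr => //.
by apply: List.Forall_impl cms => m; apply: comaximal_sym.
Qed.

Lemma max_ideal_comaximal m n :
  is_max_ideal G m -> is_max_ideal G n -> m <> n -> comaximal m n.
Proof.
move=> [Im m1 m_max] [In _ n_max] m_neq_n.
have [[_ m0 _ _ _] [_ n0 _ _ _]] := (Im, In).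
have m_mn x : m x -> addS m n x by move=> mx; exists x, 0; rewrite addr0.
have [mn_m | mnG] := m_max _ (addS_ideal Im In) m_mn; last first.
  by have [u [v [mu [nv uv]]]] := mnG 1 (rpred1 _); exists u, v.
have n_m x : n x -> m x by move=> nx; apply: mn_m; exists 0, x; rewrite add0r.
have [m_n | nG] := n_max _ Im n_m; last by case: m1; apply: nG; rewrite rpred1.
case: m_neq_n; apply: functional_extensionality => x.
by apply: propositional_extensionality; split; [apply: m_n | apply: n_m].
Qed.

Section Projection.
Variables (S K : A -> Prop).
Hypotheses (bimodS : bimod_closed G S) (idealK : is_ideal G K).

Definition killed_by (N : A -> Prop) (z : A) := forall x, N x -> S (z * x).

(* Modulo S, the sums of components in the blocks other than the one killed by K. *)
Definition cokilled (z : A) :=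
  exists N, [/\ is_ideal G N, comaximal K N & killed_by N z].

Hypothesis decomposition : forall a, exists n (z : 'I_n -> A),
  S (a - \sum_(i < n) z i) /\ (forall i, killed_by K (z i) \/ cokilled (z i)).

Lemma killed_by_bimod : bimod_closed G (killed_by K).
Proof.
have [S0 SB SMl _] := bimodS; have [_ _ _ Kl _] := idealK; split.
- by move=> x _; rewrite mul0r.
- by move=> y z Sy Sz x Kx; rewrite mulrBl; apply: SB; [apply: Sy | apply: Sz].
- by move=> g z hg Sz x Kx; rewrite -mulrA; apply: SMl => //; apply: Sz.
- by move=> g z hg Sz x Kx; rewrite -mulrA; apply: Sz; apply: Kl.
Qed.

Lemma cokilledS z : S z -> cokilled z.
Proof.
have [_ _ _ SMr] := bimodS; move=> Sz; exists (Gset G); split.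
- exact: Gset_ideal.
- exact: comaximalG.
- by move=> x Gx; apply: SMr.
Qed.

Lemma cokilled_bimod : bimod_closed G cokilled.
Proof.
have [S0 SB SMl SMr] := bimodS; have [KG _ _ _ _] := idealK; split.
- exact: cokilledS S0.
- move=> y z [N1 [IN1 KN1 Ny]] [N2 [IN2 KN2 Nz]].
  have [[N1G _ _ _ _] [N2G _ _ N2l _]] := (IN1, IN2).
  exists (spanMul N1 N2); split.
  + exact: spanMul_ideal.
  + exact: comaximal_spanMulr.
  + move=> x; elim=> [|x1 x2 N1x1 N2x2|u v _ hu _ hv].
    * by rewrite mulr0.
    * rewrite mulrA !mulrBl; apply: SB; first by apply: SMr _ _ (N2G _ N2x2) _; apply: Ny.
      by rewrite -mulrA; apply: Nz; apply: N2l _ _ (N1G _ N1x1) N2x2.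
    * by rewrite mulrDr; apply: bimod_closedD bimodS hu hv.
- move=> g z hg [N [IN KN Nz]]; exists N; split => // x Nx.
  by rewrite -mulrA; apply: SMl => //; apply: Nz.
- move=> g z hg [N [IN KN Nz]]; exists N; split => // x Nx.
  by rewrite -mulrA; apply: Nz; case: IN => _ _ _ Nl _; apply: Nl.
Qed.

Lemma killed_cokilled z : killed_by K z -> cokilled z -> S z.
Proof.
move=> Kz [N [_ [u [v [Ku Nv uv]]] Nz]].
by rewrite -[z]mulr1 -uv mulrDr; apply: bimod_closedD bimodS (Kz _ Ku) (Nz _ Nv).
Qed.

Lemma cokilled_split z : cokilled z -> exists2 x, K x & S (z - z * x).
Proof.
move=> [N [_ [u [v [Ku Nv uv]]] Nz]]; exists u => //.
by rewrite -{1}[z]mulr1 -uv mulrDr addrAC subrr add0r; apply: Nz.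
Qed.

Lemma killed_cokilled_decomposition a :
  exists c, killed_by K c /\ cokilled (a - c).
Proof.
have [n [z [Sa zP]]] := decomposition a.
have bex i : exists b : bool, if b then killed_by K (z i) else cokilled (z i).
  by case: (zP i) => zi; [exists true | exists false].
have [b bP] := fin_all_exists bex.
exists (\sum_(i < n | b i) z i); split.
- by apply: bimod_closed_sum killed_by_bimod _ => i bi; move: (bP i); rewrite bi.
- have -> : a - \sum_(i < n | b i) z i
          = (a - \sum_(i < n) z i) + \sum_(i < n | ~~ b i) z i.
    by rewrite [X in _ = _ - X + _](bigID b) /= opprD addrA subrK.
  apply: bimod_closedD cokilled_bimod (cokilledS Sa) _.
  by apply: bimod_closed_sum cokilled_bimod _ => i /negbTE bi; move: (bP i); rewrite bi.
Qed.

Definition proj_part (a : A) : A :=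
  proj1_sig (constructive_indefinite_description _ (killed_cokilled_decomposition a)).

Lemma proj_part_spec a : killed_by K (proj_part a) /\ cokilled (a - proj_part a).
Proof. by rewrite /proj_part; case: constructive_indefinite_description. Qed.

Lemma proj_part_unique a c :
  killed_by K c -> cokilled (a - c) -> S (proj_part a - c).
Proof.
have [_ killedB _ _] := killed_by_bimod; have [_ cokilledB _ _] := cokilled_bimod.
move=> Kc Nc; have [Kp Np] := proj_part_spec a.
apply: killed_cokilled; first exact: killedB.
have -> : proj_part a - c = (a - c) - (a - proj_part a).
  by rewrite [RHS]addrC opprB addrA subrK.
exact: cokilledB.
Qed.

Lemma proj_partD a b : S (proj_part (a + b) - (proj_part a + proj_part b)).
Proof.
have [Ka Na] := proj_part_spec a; have [Kb Nb] := proj_part_spec b.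
apply: proj_part_unique; first exact: bimod_closedD killed_by_bimod Ka Kb.
by rewrite opprD addrACA; apply: bimod_closedD cokilled_bimod Na Nb.
Qed.

Lemma proj_partMl g a : g \in G -> S (proj_part (g * a) - g * proj_part a).
Proof.
have [Ka Na] := proj_part_spec a; have [_ _ KMl _] := killed_by_bimod.
have [_ _ NMl _] := cokilled_bimod.
by move=> hg; apply: proj_part_unique; [apply: KMl | rewrite -mulrBr; apply: NMl].
Qed.

Lemma proj_partMr g a : g \in G -> S (proj_part (a * g) - proj_part a * g).
Proof.
have [Ka Na] := proj_part_spec a; have [_ _ _ KMr] := killed_by_bimod.
have [_ _ _ NMr] := cokilled_bimod.
by move=> hg; apply: proj_part_unique; [apply: KMr | rewrite -mulrBl; apply: NMr].
Qed.

Lemma proj_partZ c a : S (proj_part (c *: a) - c *: proj_part a).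
Proof.
rewrite -[c *: a]mulr_algl -[c *: proj_part a]mulr_algl.
by apply: proj_partMl; rewrite rpredZ ?rpred1.
Qed.

Lemma proj_part_id b : killed_by K b -> S (proj_part b - b).
Proof.
by move=> Kb; apply: proj_part_unique; rewrite // subrr; apply: cokilledS; case: bimodS.
Qed.

Lemma proj_partS a : S a -> S (proj_part a).
Proof.
move=> Sa; rewrite -[proj_part a]subr0; apply: proj_part_unique; rewrite ?subr0.
- by case: killed_by_bimod.
- exact: cokilledS.
Qed.

Lemma proj_partMK y x : K x -> S (proj_part (y * x)).
Proof.
have [KG _ _ _ _] := idealK; have [_ _ _ NMr] := cokilled_bimod.
have [Ky Ny] := proj_part_spec y.
move=> Kx; rewrite -[proj_part _]subr0; apply: proj_part_unique.
  by case: killed_by_bimod.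
rewrite subr0 -[y in y * x](subrK (proj_part y)) mulrDl.
exact: bimod_closedD cokilled_bimod (NMr _ _ (KG _ Kx) Ny) (cokilledS (Ky _ Kx)).
Qed.

Lemma proj_part_kerE a :
  S (proj_part a) <-> addS S (spanMul (@Aall _ A) K) a.
Proof.
have vanishD u v : S (proj_part u) -> S (proj_part v) -> S (proj_part (u + v)).
  move=> Su Sv; rewrite -[proj_part (u + v)](subrK (proj_part u + proj_part v)).
  exact: bimod_closedD bimodS (proj_partD u v) (bimod_closedD bimodS Su Sv).
split=> [Sa | [s [t [Ss [Kt ->]]]]].
- have [_ Na] := proj_part_spec a; have [x Kx Nx] := cokilled_split Na.
  exists (proj_part a + (a - proj_part a - (a - proj_part a) * x)).
  exists ((a - proj_part a) * x); split; first exact: bimod_closedD bimodS Sa Nx.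
  by split; [apply: spanMulM | rewrite -addrA subrK subrKC].
- apply: (vanishD); first exact: proj_partS.
  elim: Kt => [|y x _ Kx|u v _ hu _ hv].
  + by apply: proj_partS; case: bimodS.
  + exact: proj_partMK.
  + exact: vanishD.
Qed.

Lemma proj_part_bimod_iso :
  bimod_iso G (addS S (spanMul (@Aall _ A) K)) (killed_by K) S.
Proof.
exists proj_part; split; [|split; [|split; [|split; [|split; [|split; [|split]]]]]].
- move=> a b /proj_part_kerE Sab; have := proj_partD b (a - b).
  rewrite subrKC => Sa.
  have -> : proj_part a - proj_part b
          = proj_part a - (proj_part b + proj_part (a - b)) + proj_part (a - b).
    by rewrite opprD addrA subrK.
  exact: bimod_closedD bimodS Sa Sab.
- by move=> a; case: (proj_part_spec a).
- exact: proj_partD.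
- exact: proj_partZ.
- exact: proj_partMl.
- exact: proj_partMr.
- by move=> a /proj_part_kerE.
- by move=> b /proj_part_id Sb; exists b.
Qed.

End Projection.

End Ideals.

Section Blocks.
Variables (k : fieldType) (A : algType k) (G : {pred A}).
Hypothesis subalgG : subalg_closed G.
Variable R : (A -> Prop) -> (A -> Prop) -> Prop.
Hypothesis equivR : equiv_on_cfs G R.

Lemma cfs_class_max B m : cfs_class G R B -> B m -> is_max_ideal G m.
Proof. by case=> m0 [_ HB] /HB [[]]. Qed.

Lemma cfs_class_ideal B m : cfs_class G R B -> B m -> is_ideal G m.
Proof. by move=> HB /(cfs_class_max HB) []. Qed.

Lemma cfs_class_sub B C m : cfs_class G R B -> cfs_class G R C -> B m -> C m ->
  forall m', B m' -> C m'.
Proof.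
case: equivR => _ Rsym Rtrans.
move=> [b [cb HB]] [c [cc HC]] /HB [cm Rbm] /HC [_ Rcm] m' /HB [cm' Rbm'].
apply/HC; split => //; apply: (Rtrans c b m') => //.
by apply: (Rtrans c m b) => //; apply: Rsym.
Qed.

Lemma inW_sub B C n : (forall m, B m -> C m) -> inW G B n -> inW G C n.
Proof. by move=> BC [ms [Bms ->]]; exists ms; split => //; apply: List.Forall_impl Bms. Qed.

Lemma cfs_class_ideals B ms :
  cfs_class G R B -> List.Forall B ms -> List.Forall (is_ideal G) ms.
Proof. by move=> HB; apply: List.Forall_impl => m; apply: cfs_class_ideal. Qed.

Lemma inW_ideal B n : cfs_class G R B -> inW G B n -> is_ideal G n.
Proof. by move=> HB [ms [Bms ->]]; exact: idealProd_ideal (cfs_class_ideals HB Bms). Qed.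

Lemma inW_comaximal B C M N :
  cfs_class G R B -> cfs_class G R C -> ~ (exists m, B m /\ C m) ->
  inW G B M -> inW G C N -> comaximal M N.
Proof.
move=> HB HC BC [ms [Bms ->]] [ns [Cns ->]].
have [Ims Ins] := (cfs_class_ideals HB Bms, cfs_class_ideals HC Cns).
apply: comaximal_idealProdl => //; first exact: idealProd_ideal.
apply: List.Forall_impl Bms => m Bm.
apply: comaximal_idealProdr => //; first exact: cfs_class_ideal HB Bm.
apply: List.Forall_impl Cns => n Cn.
apply: (max_ideal_comaximal subalgG (cfs_class_max HB Bm) (cfs_class_max HC Cn)).
by move=> mn; apply: BC; exists m; rewrite {2}mn.
Qed.

Lemma inW_lower_bound C K1 K2 : cfs_class G R C -> inW G C K1 -> inW G C K2 ->
  exists2 n, inW G C n & forall x, n x -> K1 x /\ K2 x.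
Proof.
move=> HC [ms1 [C1 ->]] [ms2 [C2 ->]].
exists (idealProd G (ms1 ++ ms2)); first by exists (ms1 ++ ms2); rewrite List.Forall_app.
move=> x n_x; split; first exact: idealProd_catl (cfs_class_ideals HC C2) _ n_x.
exact: idealProd_catr (cfs_class_ideals HC C1) (cfs_class_ideals HC C2) _ n_x.
Qed.

Lemma strong_block_decomposition act S C K :
  cfs_class G R C -> inW G C K -> strong_block G R act S ->
  (forall a, partOf G act C S a -> forall x, K x -> S (act x a)) ->
  forall a, exists n (z : 'I_n -> A), S (a - \sum_(i < n) z i) /\
    (forall i, (forall x, K x -> S (act x (z i))) \/
      exists N, [/\ is_ideal G N, comaximal K N & forall x, N x -> S (act x (z i))]).
Proof.
move=> HC WK [dec _ _] Kkill a.
have [n [Bs [z [HB zB Sa]]]] := dec a.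
exists n, z; split => // i; have [N [WN Nz]] := zB i.
case: (classic (exists m, Bs i m /\ C m)) => [[m [Bm Cm]]|BC].
- left; apply: Kkill; exists N; split => //.
  exact: inW_sub (cfs_class_sub (HB i) HC Bm Cm) WN.
- right; exists N; split => //; first exact: inW_ideal WN.
  by apply: inW_comaximal HC (HB i) _ WK WN => -[m [Cm Bm]]; apply: BC; exists m.
Qed.

Lemma rightPart_bimod_iso C l n :
  cfs_class G R C -> inW G C n -> is_ideal G l ->
  strong_block G R (@ract _ A) (spanMul l (@Aall _ A)) ->
  (forall a, rightPart G C (spanMul l (@Aall _ A)) a ->
     forall x, n x -> spanMul l (@Aall _ A) (a * x)) ->
  bimod_iso G (addS (spanMul l (@Aall _ A)) (spanMul (@Aall _ A) n))
    (rightPart G C (spanMul l (@Aall _ A))) (spanMul l (@Aall _ A)).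
Proof.
move=> HC Wn Il block n_kills.
apply: bimod_iso_eq (proj_part_bimod_iso subalgG (bimod_closed_idealA Il)
  (inW_ideal HC Wn) (strong_block_decomposition HC Wn block n_kills)) => // b.
by split=> [n_b | /n_kills //]; exists n.
Qed.

Lemma leftPart_bimod_iso C m n :
  cfs_class G R C -> inW G C n -> is_ideal G m ->
  strong_block G R (@lact _ A) (spanMul (@Aall _ A) m) ->
  (forall a, leftPart G C (spanMul (@Aall _ A) m) a ->
     forall x, n x -> spanMul (@Aall _ A) m (x * a)) ->
  bimod_iso G (addS (spanMul n (@Aall _ A)) (spanMul (@Aall _ A) m))
    (leftPart G C (spanMul (@Aall _ A) m)) (spanMul (@Aall _ A) m).
Proof.
move=> HC Wn Im block n_kills.
set S := spanMul (@Aall _ A) m.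
have dec_converse a : exists n0 (z : 'I_n0 -> A^c), S (a - \sum_(i < n0) z i) /\
    (forall i, killed_by (A := A^c) S n (z i) \/ cokilled (A := A^c) G S n (z i)).
  have [n0 [z [Sa zP]]] := strong_block_decomposition HC Wn block n_kills a.
  exists n0, z; split => // i.
  case: (zP i) => [n_z | [N [IN nN N_z]]]; [left; exact: n_z | right].
  by exists N; split => //; apply: is_ideal_converse.
have := proj_part_bimod_iso (subalg_closed_converse subalgG)
  (bimod_closed_converse (bimod_closed_Aideal Im))
  (is_ideal_converse (inW_ideal HC Wn)) dec_converse.
move/bimod_iso_converse; apply: bimod_iso_eq => a.
- split=> -[s [t [Ss [At ->]]]]; exists t, s; rewrite addrC.
  + by split; first exact/spanMul_converse.
  + by split => //; split => //; apply/spanMul_converse.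
- by split=> [n_a | /n_kills //]; exists n.
Qed.

End Blocks.

Theorem mainTheorem18 (k : fieldType) (A : algType k) (G : {pred A})
  (R : (A -> Prop) -> (A -> Prop) -> Prop) :
  subalg_closed G ->
  equiv_on_cfs G R ->
  strong_HC_block G R ->
  forall B C D : (A -> Prop) -> Prop,
    cfs_class G R B -> cfs_class G R C -> cfs_class G R D ->
  forall m l : A -> Prop, inW G B m -> inW G D l ->
  exists n : A -> Prop, inW G C n /\
    bimod_iso G (addS (spanMul l (@Aall _ A)) (spanMul (@Aall _ A) n))
              (rightPart G C (spanMul l (@Aall _ A))) (spanMul l (@Aall _ A)) /\
    bimod_iso G (addS (spanMul n (@Aall _ A)) (spanMul (@Aall _ A) m))
              (leftPart G C (spanMul (@Aall _ A) m)) (spanMul (@Aall _ A) m).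
Proof.
move=> subalgG equivR HCblock B C D HB HC HD m l Wm Wl.
have [blockm _] := HCblock B HB m Wm.
have [_ blockl] := HCblock D HD l Wl.
have [_ _ /(_ C HC) [Kl [WKl Kl_kills]]] := blockl.
have [_ _ /(_ C HC) [Km [WKm Km_kills]]] := blockm.
have [n Wn n_sub] := inW_lower_bound subalgG HC WKl WKm.
exists n; split => //; split.
- apply: (rightPart_bimod_iso subalgG equivR HC Wn (inW_ideal subalgG HD Wl) blockl).
  by move=> a /Kl_kills Kl_a x /n_sub [/Kl_a].
- apply: (leftPart_bimod_iso subalgG equivR HC Wn (inW_ideal subalgG HB Wm) blockm).
  by move=> a /Km_kills Km_a x /n_sub [_ /Km_a].
Qed.
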